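(* Let $q\ge2$, $n\ge1$, $m=n+1$ and $R\in[m]$. Then $$\min_{{\boldsymbol y}\in\Sigma_{q,R}^m}\mathsf{H}^{\mathsf{In}}_{1\text{-}\mathsf{Ins}}({\boldsymbol y})=\log_2 m-\frac{(m-R+1)\log_2(m-R+1)}{m},$$ and the minimum is attained only by skewed channel outputs.
   Context: $\Sigma_q=\{0,\dots,q-1\}$. For sequences ${\boldsymbol x}$ of length $\ell$ and ${\boldsymbol y}$ of length $N\ge\ell$, $\omega_{{\boldsymbol x}}({\boldsymbol y})$ is the number of index tuples $1\le i_1<\dots<i_\ell\le N$ with $y_{i_j}=x_j$. The $1$-insertion channel with input length $n$ maps ${\boldsymbol x}\in\Sigma_q^n$ to ${\boldsymbol y}\in\Sigma_q^{n+1}$ with probability $\omega_{{\boldsymbol x}}({\boldsymbol y})/((n+1)q)$; under uniform transmission ($X$ uniform on $\Sigma_q^n$), $\mathsf{H}^{\mathsf{In}}_{1\text{-}\mathsf{Ins}}({\boldsymbol y})=H(X\mid Y={\boldsymbol y})$ in bits, with posterior $P({\boldsymbol x}\mid {\boldsymbol y})=\Pr\{{\boldsymbol y}\mid{\boldsymbol x}\}/\sum_{{\boldsymbol x}'}\Pr\{{\boldsymbol y}\mid{\boldsymbol x}'\}$. A run is a maximal block of identical consecutive symbols; $\Sigma_{q,R}^m$ is the set of sequences in $\Sigma_q^m$ with exactly $R$ runs. A sequence in $\Sigma_{q,R}^m$ is skewed if it has $R-1$ runs of length one and one run of length $m-(R-1)$. *)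

From HB Require Import structures.
From mathcomp Require Import all_boot all_order all_algebra.
From mathcomp Require Import all_classical all_reals exp.
Set Implicit Arguments. Unset Strict Implicit. Unset Printing Implicit Defensive.
Import Order.TTheory GRing.Theory Num.Theory.
Local Open Scope ring_scope.

Definition log2 {R : realType} (t : R) : R := ln t / ln 2.

(* omega_x(y): number of index tuples i_1<...<i_l with y_{i_j} = x_j,
   i.e. number of selection masks b (one bit per position of y) whose
   selected subsequence of y equals x. *)
Definition omega {T : eqType} (N : nat) (x : seq T) (y : N.-tuple T) : nat :=
  #|[pred b : N.-tuple bool | mask b y == x]|.

Definition ins_prob {R : realType} (q n : nat)
  (x : n.-tuple 'I_q) (y : n.+1.-tuple 'I_q) : R :=
  (omega x y)%:R / (n.+1 * q)%:R.

(* posterior P(x | y) under uniform input X on Sigma_q^n *)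
Definition posterior {R : realType} (q n : nat)
  (y : n.+1.-tuple 'I_q) (x : n.-tuple 'I_q) : R :=
  ins_prob x y / \sum_(x' : n.-tuple 'I_q) ins_prob x' y.

Definition H_in_ins {R : realType} (q n : nat) (y : n.+1.-tuple 'I_q) : R :=
  - \sum_(x : n.-tuple 'I_q)
      (let p := posterior y x in if p == 0 then 0 else p * log2 p).

Fixpoint runs {T : eqType} (s : seq T) : seq (seq T) :=
  match s with
  | [::] => [::]
  | x :: t =>
      match runs t with
      | (y :: b) :: bs =>
          if x == y then (x :: y :: b) :: bs else [:: x] :: (y :: b) :: bs
      | _ => [:: [:: x]]
      end
  end.

Definition nruns {T : eqType} (s : seq T) : nat := size (runs s).

Definition skewed {T : eqType} (R : nat) (s : seq T) : Prop :=
  perm_eq (map size (runs s)) ((size s - (R - 1))%N :: nseq (R - 1) 1%N).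

From HB Require Import structures.
From mathcomp Require Import all_boot all_order all_algebra.
From mathcomp Require Import all_classical all_reals exp.
From mathcomp Require Import ring lra zify.
Set Implicit Arguments. Unset Strict Implicit. Unset Printing Implicit Defensive.
Import Order.TTheory GRing.Theory Num.Theory.
Local Open Scope ring_scope.

(* Deleting any symbol of a run of y gives the same sequence, so under uniform
   input the posterior given y is the distribution of a uniformly random single
   deletion of y, and the deletion from a run of length l has probability l/m.
   Hence H(y) = log2 m - (1/m) sum_runs l log2 l.  Writing l = e + 1, the
   function e |-> (e+1) ln (e+1) is superadditive, strictly so for two positive
   arguments, because k ln k has strictly increasing increments.  With R runs
   the excesses e sum to m - R, so sum_runs l ln l <= (m-R+1) ln (m-R+1), with
   equality iff at most one excess is nonzero, i.e. iff y is skewed. *)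

Lemma sumn_eq0 (s : seq nat) : (sumn s == 0)%N = all (pred1 0%N) s.
Proof. by elim: s => //= a s <-; rewrite addn_eq0. Qed.

Lemma perm_eq_one_nonzero (s : seq nat) : s != [::] ->
  (count (predC1 0) s <= 1)%N -> perm_eq s (sumn s :: nseq (size s).-1 0%N).
Proof.
elim: s => [//|[|a] s IH] _ /=.
  case: s IH => [//|b s] IH /(IH isT) s_perm; rewrite add0n.
  apply: (@perm_trans _ (0%N :: sumn (b :: s) :: nseq (size s) 0%N)).
    by rewrite perm_cons.
  by rewrite -[0%N :: _]/([:: _] ++ [:: _] ++ _) perm_catCA.
rewrite add1n ltnS leqn0 eqn0Ngt -has_count has_predC negbK -sumn_eq0 => /eqP s0.
by rewrite s0 addn0; move/eqP: s0; rewrite sumn_eq0 => /all_pred1P <-.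
Qed.

Section NLnN.
Context {R : realType}.

Lemma ln_sub_lt (a b : R) : 0 < a -> 0 < b -> a != b -> ln b - ln a < (b - a) / a.
Proof.
move=> a_gt0 b_gt0 a_neq_b; rewrite -ln_div ?posrE // mulrBl divff ?gt_eqF //.
have x_neq0 : b / a - 1 != 0.
  rewrite -(divff (lt0r_neq0 a_gt0)) -mulrBl mulf_neq0 ?invr_eq0 ?(gt_eqF a_gt0) //.
  by rewrite subr_eq0 eq_sym.
have := expR_gt1Dx x_neq0; rewrite addrC subrK -ltr_ln ?posrE ?expR_gt0 ?divr_gt0 //.
by rewrite expRK.
Qed.

Definition nlnn (k : nat) : R := k%:R * ln k%:R.

Lemma nlnn1 : nlnn 1 = 0. Proof. by rewrite /nlnn ln1 mulr0. Qed.

Lemma nlnn_incr_lt k : nlnn k.+1 - nlnn k < nlnn k.+2 - nlnn k.+1.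
Proof.
rewrite /nlnn -[k.+2]addn2 -[k.+1]addn1 !natrD.
set u : R := k%:R; have u_ge0 : 0 <= u by rewrite ler0n.
have lower : 1 < (u + 2) * (ln (u + 2) - ln (u + 1)).
  have : ln (u + 1) - ln (u + 2) < (u + 1 - (u + 2)) / (u + 2).
    by apply: ln_sub_lt; try lra; apply/eqP => /eqP; lra.
  rewrite ltr_pdivlMr; lra.
have upper : u * (ln (u + 1) - ln u) < 1.
  have [->|u_neq0] := eqVneq u 0; first by rewrite mul0r.
  have : ln (u + 1) - ln u < (u + 1 - u) / u.
    by apply: ln_sub_lt; try lra; apply/eqP => /eqP; lra.
  rewrite ltr_pdivlMr; lra.
lra.
Qed.

Lemma nlnn_incr_strict :
  {homo (fun k => nlnn k.+1 - nlnn k) : i j / (i < j)%N >-> i < j}.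
Proof. exact: homo_ltn lt_trans nlnn_incr_lt. Qed.

Lemma nlnn_incr_mono :
  {homo (fun k => nlnn k.+1 - nlnn k) : i j / (i <= j)%N >-> i <= j}.
Proof. exact: homo_leq le_refl le_trans (fun k => ltW (nlnn_incr_lt k)). Qed.

Lemma nlnnS_superadd a b : nlnn a.+1 + nlnn b.+1 <= nlnn (a + b).+1.
Proof.
elim: a => [|a IH]; first by rewrite nlnn1 add0r.
have := @nlnn_incr_mono a.+1 (a + b).+1 (leq_addr b a); rewrite addSn; lra.
Qed.

Lemma nlnnS_superadd_lt a b :
  (0 < a)%N -> (0 < b)%N -> nlnn a.+1 + nlnn b.+1 < nlnn (a + b).+1.
Proof.
case: a => // a _ b_gt0; have step : (a.+1 < (a + b).+1)%N by lia.
have := nlnn_incr_strict step; have := nlnnS_superadd a b; rewrite addSn; lra.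
Qed.

Lemma sum_nlnnS_le (s : seq nat) : \sum_(k <- s) nlnn k.+1 <= nlnn (sumn s).+1.
Proof.
elim: s => [|a s IH]; first by rewrite big_nil nlnn1.
rewrite big_cons /=; have := nlnnS_superadd a (sumn s); lra.
Qed.

Lemma sum_nlnnS_lt (s : seq nat) :
  (1 < count (predC1 0) s)%N -> \sum_(k <- s) nlnn k.+1 < nlnn (sumn s).+1.
Proof.
elim: s => [//|[|a] s IH] /=; rewrite big_cons.
  by rewrite nlnn1 add0r add0n => /IH.
rewrite add1n ltnS => s_nz.
have sumn_gt0 : (0 < sumn s)%N by rewrite lt0n sumn_eq0 -has_predC has_count.
have := sum_nlnnS_le s; have := @nlnnS_superadd_lt a.+1 _ isT sumn_gt0; lra.
Qed.

Lemma sum_nlnnS_eq (s : seq nat) :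
  (count (predC1 0) s <= 1)%N -> \sum_(k <- s) nlnn k.+1 = nlnn (sumn s).+1.
Proof.
move=> count_le; have [->|s_neq0] := eqVneq s [::]; first by rewrite big_nil nlnn1.
rewrite (perm_big _ (perm_eq_one_nonzero s_neq0 count_le)) big_cons big1_seq /= ?addr0 //.
by move=> k /nseqP[-> _]; exact: nlnn1.
Qed.

End NLnN.

Section Entropy.
Context {R : realType}.

Lemma ln2_gt0 : 0 < ln (2 : R).
Proof. by rewrite ln_gt0 // ltr1n. Qed.

Lemma entropy_weights (X : finType) (w : X -> R) (S : R) :
  (forall x, 0 <= w x) -> \sum_x w x = S -> 0 < S ->
  - \sum_x (let p := w x / S in if p == 0 then 0 else p * log2 p)
    = log2 S - (\sum_x w x * ln (w x)) / (S * ln 2).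
Proof.
move=> w_ge0 sum_w S_gt0.
have term x : (let p := w x / S in if p == 0 then 0 else p * log2 p)
              = w x * (ln (w x) - ln S) / (S * ln 2).
  have [w0|w_neq0] := eqVneq (w x) 0; first by rewrite /= w0 !mul0r eqxx.
  have w_gt0 : 0 < w x by rewrite lt0r w_neq0 w_ge0.
  rewrite /= mulf_eq0 invr_eq0 (negbTE w_neq0) (gt_eqF S_gt0) /log2 ln_div ?posrE //.
  by field; rewrite (gt_eqF S_gt0) (gt_eqF ln2_gt0).
rewrite (eq_bigr _ (fun x _ => term x)) -mulr_suml.
under eq_bigr => x _ do rewrite mulrBr.
rewrite sumrB -mulr_suml sum_w /log2.
by field; rewrite (gt_eqF S_gt0) (gt_eqF ln2_gt0).
Qed.

Lemma sum_tuple_count (T : finType) n (D : seq (seq T)) (G : seq T -> R) :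
  all (fun t => size t == n) D ->
  \sum_(x : n.-tuple T) (count_mem (val x) D)%:R * G x = \sum_(t <- D) G t.
Proof.
elim: D => [|t D IH] /=; first by rewrite big_nil big1 // => x _; rewrite mul0r.
move=> /andP[/eqP size_t /IH {}IH]; rewrite big_cons -IH.
under eq_bigr => x _ do rewrite natrD mulrDl.
rewrite big_split /=; congr (_ + _).
rewrite (bigD1 (Tuple (introT eqP size_t))) //= eqxx mul1r big1 ?addr0 // => x x_neq.
rewrite (_ : t == val x = false) ?mul0r //.
by apply: contraNF x_neq => /eqP t_x; apply/eqP/val_inj.
Qed.

End Entropy.

Section Runs.
Variable T : eqType.
Implicit Types (x y : T) (s : seq T).

Lemma runs_step x s : runs (x :: s) =
  match runs s with
  | (y :: b) :: bs => if x == y then (x :: y :: b) :: bs else [:: x] :: (y :: b) :: bs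
  | _ => [:: [:: x]]
  end.
Proof. by []. Qed.

Lemma runs_consE x s : exists b bs, runs (x :: s) = (x :: b) :: bs.
Proof.
rewrite runs_step; case: (runs s) => [|[|y b] bs]; try by exists nil, nil.
by case: ifP => [/eqP->|_]; [exists (y :: b), bs | exists nil, ((y :: b) :: bs)].
Qed.

Lemma runs_cons_eq x s b bs : runs (x :: s) = (x :: b) :: bs ->
  runs (x :: x :: s) = (x :: x :: b) :: bs.
Proof. by move=> E; rewrite runs_step E eqxx. Qed.

Lemma runs_cons_neq x y s : x != y -> runs (x :: y :: s) = [:: x] :: runs (y :: s).
Proof. by have [b [bs E]] := runs_consE y s; rewrite runs_step E => /negbTE ->. Qed.

Lemma runs_nseq x c : runs (nseq c.+1 x) = [:: nseq c.+1 x].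
Proof. by elim: c => // c IH; exact: runs_cons_eq IH. Qed.

Lemma nil_notin_runs s : [::] \notin runs s.
Proof.
elim: s => // x s; rewrite runs_step.
by case: (runs s) => [|[|y b] bs] //=; case: ifP; rewrite !inE.
Qed.

Lemma flatten_runs s : flatten (runs s) = s.
Proof.
elim: s => // x s; have := nil_notin_runs s; rewrite runs_step.
by case: (runs s) => [|[|y b] bs] //= _ <- //; case: ifP.
Qed.

Definition run_excess s := [seq (size r).-1 | r <- runs s].

Lemma size_run_excess s : size (run_excess s) = nruns s.
Proof. exact: size_map. Qed.

Lemma run_excessK s : [seq e.+1 | e <- run_excess s] = [seq size r | r <- runs s].
Proof.
rewrite -map_comp; apply/eq_in_map => r r_in /=; rewrite prednK // lt0n size_eq0.
by apply: contraNneq (nil_notin_runs s) => <-.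
Qed.

Lemma sumn_run_excess s : (sumn (run_excess s) + nruns s)%N = size s.
Proof.
rewrite -[in RHS](flatten_runs s) size_flatten /shape -run_excessK.
rewrite -size_run_excess; elim: (run_excess s) => //= e E <-.
by rewrite addnS addnA.
Qed.

Lemma skewed_of_run_excess s : s != [::] ->
  (count (predC1 0) (run_excess s) <= 1)%N -> skewed (nruns s) s.
Proof.
move=> s_neq0 count_le; have sumE := sumn_run_excess s.
have E_neq0 : run_excess s != [::].
  by apply: contraNneq s_neq0 => E0; rewrite -size_eq0 -sumE -size_run_excess E0.
have := perm_map succn (perm_eq_one_nonzero E_neq0 count_le).
have : (0 < nruns s)%N by rewrite -size_run_excess lt0n size_eq0.
rewrite run_excessK /skewed /= map_nseq size_run_excess => runs_gt0.
by rewrite subn1 (_ : (size s - (nruns s).-1)%N = (sumn (run_excess s)).+1) //; lia.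
Qed.

End Runs.

Section Deletions.
Variable T : eqType.
Implicit Types (x y : T) (s : seq T).

(* [del j s] removes the [j]-th entry of [s]; it is written with a mask so that
   deletions can be matched against the masks counted by [omega]. *)
Fixpoint delmask (j n : nat) : bitseq :=
  if n is n'.+1 then
    if j is j'.+1 then true :: delmask j' n' else false :: nseq n' true
  else [::].

Definition del j s := mask (delmask j (size s)) s.

Definition dels s := [seq del j s | j <- iota 0 (size s)].

Lemma size_delmask j n : size (delmask j n) = n.
Proof. by elim: n j => [|n IH] [|j] //=; rewrite ?size_nseq ?IH. Qed.

Lemma count_delmask j n : (j < n)%N -> count id (delmask j n) = n.-1.
Proof.
elim: n j => [|n IH] [|j] //= j_lt; first by rewrite count_nseq mul1n.
by rewrite IH // add1n prednK // (leq_ltn_trans (leq0n j) j_lt).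
Qed.

Lemma index_delmask j n : (j < n)%N -> index false (delmask j n) = j.
Proof. by elim: n j => [|n IH] [|j] //= /IH ->. Qed.

Lemma delmask_index (b : bitseq) :
  (count id b).+1 = size b -> delmask (index false b) (size b) = b.
Proof.
elim: b => [//|[] b IH] /=; first by rewrite add1n => -[/IH ->].
rewrite add0n => -[b_true]; congr (_ :: _).
by apply/esym/all_pred1P; rewrite all_count -b_true; apply/eqP/eq_count => -[].
Qed.

Lemma size_del j s : (j < size s)%N -> size (del j s) = (size s).-1.
Proof. by move=> j_lt; rewrite size_mask ?size_delmask // count_delmask. Qed.

Lemma all_size_dels s : all (fun t => size t == (size s).-1) (dels s).
Proof.
by apply/allP => t /mapP[j]; rewrite mem_iota add0n => /andP[_ j_lt] ->; rewrite size_del.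
Qed.

Lemma dels_cons x s : dels (x :: s) = s :: map (cons x) (dels s).
Proof.
rewrite /dels /= /del /= mask_true // (iotaDl 1 0) -!map_comp.
by congr (_ :: _); apply: eq_map.
Qed.

Lemma count_mem_cons_map x s (ss : seq (seq T)) :
  count_mem (x :: s) (map (cons x) ss) = count_mem s ss.
Proof. by rewrite count_map; apply: eq_count => t; rewrite /= eqseq_cons eqxx. Qed.

Lemma count_mem_dels_cons x s t :
  count_mem (x :: t) (dels (x :: s)) = ((s == x :: t) + count_mem t (dels s))%N.
Proof. by rewrite dels_cons; move: (dels s) => ss; rewrite /= count_mem_cons_map. Qed.

Lemma count_dels_behead x s :
  count_mem s (dels (x :: s)) = size (head [::] (runs (x :: s))).
Proof.
elim: s x => [//|y s IH] x; have [<-|x_neq_y] := eqVneq x y.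
  have [b [bs E]] := runs_consE x s.
  by rewrite count_mem_dels_cons eqxx IH (runs_cons_eq E) E.
rewrite runs_cons_neq // dels_cons; move: (dels _) => ss.
rewrite /= eqxx count_map (eq_count (a2 := pred0)) ?count_pred0 // => t.
by rewrite /= eqseq_cons (negbTE x_neq_y).
Qed.

End Deletions.

Lemma omega_dels (T : eqType) n (x : seq T) (y : n.+1.-tuple T) :
  size x = n -> omega x y = count_mem x (dels y).
Proof.
move=> size_x.
have dmaskP (j : 'I_n.+1) : size (delmask j n.+1) == n.+1 by rewrite size_delmask.
pose dmask j := Tuple (dmaskP j).
have dmask_inj : injective dmask.
  by move=> i j /(congr1 (index false \o val)) /=; rewrite !index_delmask // => /val_inj.
have -> : count_mem x (dels y) = #|[pred j : 'I_n.+1 | del j y == x]|.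
  rewrite /dels size_tuple count_map -val_enum_ord count_map cardE /enum_mem.
  by rewrite size_filter count_filter; apply: eq_count => j; rewrite !inE andbT.
rewrite /omega -(card_imset _ dmask_inj); apply: eq_card => b; rewrite inE /=.
apply/idP/imsetP => [/eqP mask_b|[j]]; last by rewrite inE /del size_tuple => ? ->.
have count_b : (count id b).+1 = size b.
  by rewrite -(size_mask (s := y)) ?mask_b ?size_x !size_tuple.
have j_lt : (index false b < n.+1)%N.
  suff : false \in b by rewrite -index_mem size_tuple.
  have : ~~ all id b by rewrite all_count -count_b neq_ltn ltnSn.
  by case/allPn => -[].
have b_eq : delmask (index false b) n.+1 = b.
  by have := delmask_index count_b; rewrite size_tuple.
exists (Ordinal j_lt); first by rewrite inE /del size_tuple b_eq mask_b.
by apply: val_inj; rewrite /= b_eq.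
Qed.

Section InsertionEntropy.
Context {R : realType}.

Lemma sum_ln_count_dels (T : eqType) (s : seq T) :
  \sum_(t <- dels s) ln (count_mem t (dels s))%:R = \sum_(r <- runs s) nlnn (size r) :> R.
Proof.
elim: s => [|x s IH]; first by rewrite /dels !big_nil.
rewrite {1}dels_cons big_cons big_map count_dels_behead.
under eq_bigr => t _ do rewrite count_mem_dels_cons.
case: s IH => [|y s] IH; first by rewrite /dels big_nil big_seq1 addr0 ln1 nlnn1.
case: (eqVneq x y) IH => [<-|x_neq_y] IH; last first.
  rewrite runs_cons_neq // [in RHS]big_cons -IH; congr (_ + _); first by rewrite nlnn1 ln1.
  by apply: eq_bigr => t _; rewrite eqseq_cons eq_sym (negbTE x_neq_y).
have [b [bs E]] := runs_consE x s.
rewrite (runs_cons_eq E) [in RHS]big_cons; rewrite E [in RHS]big_cons in IH.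
set D := dels (x :: s) in IH *.
have count_s : count_mem s D = (size b).+1 by rewrite /D count_dels_behead E.
(* Prepending [x] lengthens the first run, so only the count of [s], the deletion
   from that run, goes up. *)
have term t : ln ((x :: s == x :: t) + count_mem t D)%:R = ln (count_mem t D)%:R
    + (t == s)%:R * (ln (size b).+2%:R - ln (size b).+1%:R) :> R.
  rewrite eqseq_cons eqxx eq_sym; have [->|_] := eqVneq t s; last first.
    by rewrite add0n mul0r addr0.
  by rewrite count_s add1n mul1r addrC subrK.
rewrite (eq_bigr _ (fun t _ => term t)) big_split IH -mulr_suml.
have -> : \sum_(t <- D) ((t == s) : nat)%:R = (size b).+1%:R :> R.
  by rewrite -natr_sum -count_s -sumn_count sumnE big_map.
rewrite /nlnn /= -[(size b).+2]addn1 natrD; ring.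
Qed.

Lemma H_in_ins_runs q n (y : n.+1.-tuple 'I_q) :
  H_in_ins y = log2 (n.+1%:R : R) - (\sum_(r <- runs y) nlnn (size r)) / (n.+1%:R * ln 2).
Proof.
have q_gt0 : (0 < q)%N := leq_ltn_trans (leq0n _) (ltn_ord (thead y)).
have sizes : all (fun t => size t == n) (dels y) by have := all_size_dels y; rewrite size_tuple.
have omegaE (x : n.-tuple 'I_q) : omega x y = count_mem (val x) (dels y).
  exact: omega_dels (size_tuple x).
have sum_omega : \sum_(x : n.-tuple 'I_q) (omega x y)%:R = n.+1%:R :> R.
  under eq_bigr => x _ do rewrite omegaE -[_%:R]mulr1.
  rewrite (sum_tuple_count (fun _ => 1) sizes) /dels big_map size_tuple.
  by rewrite -[iota 0 n.+1]/(index_iota 0 n.+1) sumr_const_nat subn0.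
have posteriorE x : posterior y x = (omega x y)%:R / n.+1%:R :> R.
  rewrite /posterior /ins_prob -mulr_suml sum_omega.
  by field; rewrite addrC natr1 !pnatr_eq0 -!lt0n q_gt0.
rewrite /H_in_ins; under eq_bigr => x _ do rewrite posteriorE.
rewrite (entropy_weights _ sum_omega) ?ltr0n // -sum_ln_count_dels.
under eq_bigr => x _ do rewrite omegaE.
by rewrite (sum_tuple_count (fun t => ln (count_mem t (dels y))%:R) sizes).
Qed.

Lemma H_in_ins_run_excess q n (y : n.+1.-tuple 'I_q) :
  H_in_ins y = log2 (n.+1%:R : R)
               - (\sum_(e <- run_excess y) nlnn e.+1) / (n.+1%:R * ln 2).
Proof. by rewrite H_in_ins_runs -(big_map size xpredT) -run_excessK big_map. Qed.

End InsertionEntropy.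

Section SkewedWitness.
Variables (T : eqType) (a b : T).
Hypothesis a_neq_b : a != b.

Fixpoint skew_seq (c k : nat) : seq T :=
  if k is k'.+1 then (if odd k then b else a) :: skew_seq c k' else nseq c.+1 a.

Lemma size_skew_seq c k : size (skew_seq c k) = (c.+1 + k)%N.
Proof. by elim: k => [|k IH] /=; rewrite ?size_nseq ?addn0 ?IH ?addnS. Qed.

Lemma skew_seq_head c k : exists t, skew_seq c k = (if odd k then b else a) :: t.
Proof. by case: k => [|k]; [exists (nseq c a) | exists (skew_seq c k)]. Qed.

Lemma run_excess_skew_seq c k : run_excess (skew_seq c k) = rcons (nseq k 0%N) c.
Proof.
elim: k => [|k IH].
  by rewrite /run_excess -[skew_seq c 0]/(nseq c.+1 a) runs_nseq /= size_nseq.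
have [t E] := skew_seq_head c k.
rewrite /run_excess -[skew_seq c k.+1]/(_ :: skew_seq c k) E runs_cons_neq -?E.
  by rewrite /= -IH.
by rewrite /=; case: (odd k); rewrite // eq_sym.
Qed.

Lemma exists_tuple_run_excess m r : (0 < r <= m)%N ->
  exists y : m.-tuple T, run_excess y = rcons (nseq r.-1 0%N) (m - r)%N.
Proof.
move=> /andP[r_gt0 r_le]; have size_y : size (skew_seq (m - r) r.-1) == m.
  by rewrite size_skew_seq; apply/eqP; lia.
by exists (Tuple size_y); exact: run_excess_skew_seq.
Qed.

End SkewedWitness.

Theorem lemma10 (RR : realType) (q n r : nat) :
  (2 <= q)%N -> (1 <= n)%N -> (1 <= r <= n.+1)%N ->
  let m := n.+1 in
  let v : RR := log2 (m%:R : RR)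
               - ((m - r + 1)%N%:R * log2 ((m - r + 1)%N%:R : RR)) / m%:R in
  [/\ (forall y : m.-tuple 'I_q, nruns y = r -> v <= H_in_ins y),
      (exists y : m.-tuple 'I_q, nruns y = r /\ H_in_ins y = v) &
      (forall y : m.-tuple 'I_q, nruns y = r -> H_in_ins y = v -> skewed r y)].
Proof.
move=> q_ge2 _ r_range m v; have /andP[r_gt0 _] := r_range.
have mln2_gt0 : 0 < m%:R * ln (2 : RR) by rewrite mulr_gt0 ?ltr0n ?ln2_gt0.
have gap (y : m.-tuple 'I_q) : nruns y = r -> H_in_ins y - v =
    (nlnn (sumn (run_excess y)).+1 - \sum_(e <- run_excess y) nlnn e.+1) / (m%:R * ln 2).
  move=> runs_y; have := sumn_run_excess y; rewrite size_tuple runs_y => sumE.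
  rewrite H_in_ins_run_excess /v (_ : (m - r + 1)%N = (sumn (run_excess y)).+1); last by lia.
  by rewrite /nlnn /log2 /m; field; rewrite (gt_eqF ln2_gt0) addrC natr1 pnatr_eq0.
split.
- by move=> y /gap; rewrite -subr_ge0 => ->; rewrite divr_ge0 ?subr_ge0 ?sum_nlnnS_le ?ltW.
- have a_neq_b : Ordinal (ltnW q_ge2) != Ordinal q_ge2 by [].
  have [y E] := exists_tuple_run_excess a_neq_b r_range; exists y.
  have runs_y : nruns y = r by rewrite -size_run_excess E size_rcons size_nseq prednK.
  split=> //; apply/eqP; rewrite -subr_eq0 gap // sum_nlnnS_eq ?subrr ?mul0r //.
  by rewrite E -cats1 count_cat count_nseq /= mul0n addn0 leq_b1.
- move=> y runs_y /eqP; rewrite -subr_eq0 gap // mulf_eq0 invr_eq0 (gt_eqF mln2_gt0) orbF.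
  rewrite subr_eq0 => /eqP sum_eq; rewrite -runs_y; apply: skewed_of_run_excess.
    by rewrite -size_eq0 size_tuple.
  by rewrite leqNgt; apply/negP => /(@sum_nlnnS_lt RR); rewrite sum_eq ltxx.
Qed.
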